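(* Let $P=(Q,I,M,\Delta)$ be a broadcast protocol and consider a run of the saturation algorithm on $P$, with $S_0=I,S_1,\dots,S_m$ the values of the set $S$ after each iteration and $c_0=|I|,c_1,\dots,c_m$ the corresponding values of the counter $c$. For every $0\le i\le m$, there exist an initial configuration $\gamma_0$, a configuration $\gamma=(V,E,L)$ and a reconfigurable execution $\rho$ from $\gamma_0$ to $\gamma$ such that $L(\gamma)=S_i$, $\rho$ has exactly $c_i$ nodes, and every node has active length at most $i$ along $\rho$.
   Context: A broadcast protocol is a tuple $P=(Q,I,M,\Delta)$ where $Q$ is a finite set of states, $I\subseteq Q$ initial states, $M$ a finite message alphabet and $\Delta\subseteq Q\times\{!!m,\ ??m \mid m\in M\}\times Q$ ($!!m$ = broadcast, $??m$ = reception). Protocols are complete for receptions: for every $q$, $m$ there is $q'$ with $(q,??m,q')\in\Delta$. A configuration is a finite undirected graph $\gamma=(V,E,L)$, $E$ symmetric irreflexive, $L:V\to Q$; $L(\gamma)=L(V)$; $\gamma$ is initial if $L(V)\subseteq I$. A reconfigurable step goes from $\gamma=(V,E,L)$ to $\gamma'=(V,E',L')$ ($E'$ arbitrary) if there exist a node $v$ and $m\in M$ with $(L(v),!!m,L'(v))\in\Delta$ and for every $v'\neq v$: if $v'$ is a neighbour of $v$ in $E$ then $(L(v'),??m,L'(v'))\in\Delta$, otherwise $L'(v')=L(v')$; $v$ broadcasts in this step. A reconfigurable execution is a sequence of configurations over a fixed node set starting from an initial one with consecutive reconfigurable steps; its number of nodes is $|V|$; the active length of a node $v$ is the number of steps in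 which $v$ broadcasts. The saturation algorithm: start with $S:=I$, $c:=|I|$; repeat: if there is $(q_1,!!m,q_2)\in\Delta$ with $q_1\in S$, $q_2\notin S$, add $q_2$ to $S$ and $c:=c+1$; else if there are $(q_1,!!m,q_2),(q_1',??m,q_2')\in\Delta$ with $q_1,q_2,q_1'\in S$, $q_2'\notin S$, add $q_2'$ and $c:=c+2$; else stop and return $S$. Each iteration adds exactly one state. *)

From mathcomp Require Import all_boot.
Set Implicit Arguments. Unset Strict Implicit. Unset Printing Implicit Defensive.

(* Actions of a broadcast protocol: !!m (broadcast) and ??m (reception). *)
Inductive act (M : Type) := Bc of M | Rc of M.
Arguments Bc {M}. Arguments Rc {M}.

(* A broadcast protocol P = (Q, I, M, Delta) is given by finite types Q, M,
   a set I : {set Q} and a transition relation D : Q -> act M -> Q -> bool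
   ((q, a, q') \in Delta  <->  D q a q'). *)
Definition complete_receptions (Q M : Type) (D : Q -> act M -> Q -> bool) :=
  forall (q : Q) (m : M), exists q' : Q, D q (Rc m) q'.

Section Saturation.
Variables (Q M : finType) (I : {set Q}) (D : Q -> act M -> Q -> bool).

Definition rule1 (S : {set Q}) (q2 : Q) :=
  exists q1 m, [/\ D q1 (Bc m) q2, q1 \in S & q2 \notin S].

Definition rule2 (S : {set Q}) (q2' : Q) :=
  exists q1 q2 q1' m,
    [/\ D q1 (Bc m) q2, D q1' (Rc m) q2', q1 \in S, q2 \in S &
        (q1' \in S) && (q2' \notin S)].

Definition sat_iter (S : {set Q}) (c : nat) (S' : {set Q}) (c' : nat) :=
  (exists q2, [/\ rule1 S q2, S' = q2 |: S & c' = c + 1])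
  \/ ((forall q, ~ rule1 S q) /\
      exists q2', [/\ rule2 S q2', S' = q2' |: S & c' = c + 2]).

Definition sat_stop (S : {set Q}) :=
  (forall q, ~ rule1 S q) /\ (forall q, ~ rule2 S q).

Definition sat_run (m : nat) (S : nat -> {set Q}) (c : nat -> nat) :=
  [/\ S 0 = I, c 0 = #|I|,
      (forall i, i < m -> sat_iter (S i) (c i) (S i.+1) (c i.+1))
    & sat_stop (S m)].
End Saturation.

Record config (V Q : Type) := Config { edges : V -> V -> bool; lab : V -> Q }.

Section Exec.
Variables (Q M : finType) (I : {set Q}) (D : Q -> act M -> Q -> bool).
Variable V : finType.

Definition wf_config (g : config V Q) :=
  (forall u w, edges g u w = edges g w u) /\ (forall u, ~~ edges g u u).

Definition labels (g : config V Q) : {set Q} := [set lab g v | v : V].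

Definition initial (g : config V Q) := forall v, lab g v \in I.

Definition rstep (g : config V Q) (v : V) (m : M) (g' : config V Q) :=
  D (lab g v) (Bc m) (lab g' v) /\
  forall v', v' != v ->
    (edges g v v' -> D (lab g v') (Rc m) (lab g' v')) /\
    (~~ edges g v v' -> lab g' v' = lab g v').

Fixpoint valid_steps (g : config V Q) (s : seq (V * M * config V Q)) : Prop :=
  match s with
  | [::] => True
  | (v, m, g') :: s' => [/\ wf_config g', rstep g v m g' & valid_steps g' s']
  end.

Definition rexec (g0 : config V Q) (s : seq (V * M * config V Q)) :=
  [/\ wf_config g0, initial g0 & valid_steps g0 s].

Definition final_config (g0 : config V Q) (s : seq (V * M * config V Q)) :=
  last g0 [seq x.2 | x <- s].

Definition active_length (s : seq (V * M * config V Q)) (v : V) :=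
  count (fun x => x.1.1 == v) s.
End Exec.

From mathcomp Require Import all_boot.
Set Implicit Arguments. Unset Strict Implicit. Unset Printing Implicit Defensive.

(* A node copying an
   existing node u is added by cloning u: the clone shares the edges of u, so
   it receives whatever u receives, and it repeats each broadcast of u in the
   next step, from a configuration without edges.  Since the edges of the last
   configuration can be chosen freely, one more step then performs an
   iteration: for rule 1 a clone of a q1-node broadcasts alone, for rule 2 a
   clone of a q1-node broadcasts to a clone of a q1'-node.  Only the
   broadcasting clone increases its active length, and by one. *)

Lemma imset_option (aT rT : finType) (f : option aT -> rT) :
  [set f x | x : option aT] = f None |: [set f (Some x) | x : aT].
Proof.
apply/setP=> q; rewrite in_setU1.
apply/imsetP/predU1P => [[[x|] _ ->]|[->|/imsetP [x _ ->]]].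
- by right; apply: imset_f.
- by left.
- by exists None.
- by exists (Some x).
Qed.

Section Executions.
Variables (Q M : finType) (I : {set Q}) (D : Q -> act M -> Q -> bool).

Definition edgeless (V : Type) (L : V -> Q) : config V Q :=
  Config (fun _ _ => false) L.

Lemma valid_steps_rcons (V : finType) (g : config V Q) s v m g' :
  valid_steps D g (rcons s (v, m, g')) <->
  [/\ valid_steps D g s, wf_config g' & rstep D (final_config g s) v m g'].
Proof.
elim: s g => [|[[w m0] h] s IH] g /=; first by split=> [[]|[]].
split=> [[wf_h st_h /IH [vs wf' st']] | [[wf_h st_h vs] wf' st']] //.
by split=> //; apply/IH.
Qed.

Lemma final_config_rcons (V : finType) (g : config V Q)
    (s : seq (V * M * config V Q)) v m g' :
  final_config g (rcons s (v, m, g')) = g'.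
Proof. by rewrite /final_config map_rcons last_rcons. Qed.

Lemma active_length_rcons (V : finType)
    (s : seq (V * M * config V Q)) v m g' w :
  active_length (rcons s (v, m, g')) w = active_length s w + (v == w).
Proof. by rewrite /active_length -cats1 count_cat /= addn0. Qed.

(* A step never reads the edges of its target configuration. *)
Lemma rexec_rewire_final (V : finType) (g0 : config V Q) s E :
  rexec I D g0 s -> wf_config (Config E (lab (final_config g0 s))) ->
  exists (g0' : config V Q) s',
    [/\ rexec I D g0' s',
        final_config g0' s' = Config E (lab (final_config g0 s))
      & active_length s' =1 active_length s].
Proof.
case/lastP: s => [|s [[v m] h]] [wf0 init0 vs] wfE.
  by exists (Config E (lab g0)), [::].
rewrite final_config_rcons in wfE *.
have /valid_steps_rcons [vs' wf_h st_h] := vs.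
exists g0, (rcons s (v, m, Config E (lab h))); split.
- by split=> //; apply/valid_steps_rcons.
- by rewrite final_config_rcons.
- by move=> w; rewrite !active_length_rcons.
Qed.

Definition realizes (V : finType) (L : V -> Q) (k : nat) :=
  exists (g0 : config V Q) (s : seq (V * M * config V Q)),
    [/\ rexec I D g0 s, lab (final_config g0 s) = L
      & forall v, active_length s v <= k].

Lemma realizes_step (V : finType) (L : V -> Q) k E v m (g' : config V Q) :
  realizes L k -> wf_config (Config E L) -> wf_config g' ->
  rstep D (Config E L) v m g' -> realizes (lab g') k.+1.
Proof.
case=> g0 [s [ex <- bound]] wfE wf' st.
have [g1 [s1 [[wf1 init1 vs1] fin1 act1]]] := rexec_rewire_final ex wfE.
exists g1, (rcons s1 (v, m, g')); split.
- by split=> //; apply/valid_steps_rcons; rewrite fin1.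
- by rewrite final_config_rcons.
- by move=> w; rewrite active_length_rcons act1 -addn1 leq_add ?leq_b1.
Qed.

Section Clone.
Variables (V : finType) (u : V).

Definition clone (g : config V Q) : config (option V) Q :=
  Config (fun x y => edges g (odflt u x) (odflt u y))
         (fun x => lab g (odflt u x)).

(* u has already moved from [g] to [g'], its clone [None] has not. *)
Definition clone_lagging (g g' : config V Q) : config (option V) Q :=
  edgeless (fun x => if x is Some a then lab g' a else lab g u).

Fixpoint clone_steps (g : config V Q) (s : seq (V * M * config V Q)) :
    seq (option V * M * config (option V) Q) :=
  match s with
  | [::] => [::]
  | (v, m, g') :: s' =>
    if v == u then
      [:: (Some u, m, clone_lagging g g'), (None, m, clone g')
        & clone_steps g' s']
    else (Some v, m, clone g') :: clone_steps g' s'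
  end.

Lemma wf_clone g : wf_config g -> wf_config (clone g).
Proof. by case=> sym irr; split=> [x y|x]; [apply: sym | apply: irr]. Qed.

Lemma valid_clone_steps g s :
  wf_config g -> valid_steps D g s -> valid_steps D (clone g) (clone_steps g s).
Proof.
elim: s g => [//|[[v m] g'] s IH] g wf_g /= [wf' [bc rc] vs].
have [irr_u clone_g'] := (proj2 wf_g u, IH g' wf' vs).
have [e_vu|neq_vu] := eqVneq v u.
  subst v; split=> //.
    split=> // [[a|]] /= ne; last by rewrite (negbTE irr_u).
    by apply: rc; apply: contraNneq ne => ->.
  by split=> /=; [exact: wf_clone | split=> // [[a|]] | ].
split; [exact: wf_clone | split=> // [[a|]] /= ne | by []].
  by apply: rc; apply: contraNneq ne => ->.
by apply: rc; rewrite eq_sym.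
Qed.

Lemma final_clone_steps g s :
  final_config (clone g) (clone_steps g s) = clone (final_config g s).
Proof.
rewrite /final_config; elim: s g => [//|[[v m] g'] s IH] g /=.
by case: (v == u); apply: IH.
Qed.

Lemma active_length_clone_steps g s x :
  active_length (clone_steps g s) x = active_length s (odflt u x).
Proof.
rewrite /active_length; elim: s g => [//|[[v m] g'] s IH] g /=.
by have [->|neq_vu] := eqVneq v u; case: x IH => [a|] /= IH;
  rewrite ?IH ?eqxx ?(negbTE neq_vu).
Qed.

End Clone.

Lemma realizes_clone (V : finType) (L : V -> Q) k (u : V) :
  realizes L k -> realizes (fun x => L (odflt u x)) k.
Proof.
case=> g0 [s [[wf0 init0 vs] <- bound]].
exists (clone u g0), (clone_steps u g0 s).
rewrite final_clone_steps; split=> //.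
- by split=> [|x|]; [exact: wf_clone | exact: init0 | exact: valid_clone_steps].
- by move=> x; rewrite active_length_clone_steps.
Qed.

Definition realizable (S : {set Q}) (c k : nat) :=
  exists (V : finType) (L : V -> Q),
    [/\ realizes L k, [set L v | v : V] = S & #|V| = c].

Lemma realizable_initial : realizable I #|I| 0.
Proof.
exists {q | q \in I}, val; split; last by rewrite card_sig.
  by exists (edgeless val), [::]; split=> //; split=> // x; apply: valP.
apply/setP=> q; apply/imsetP/idP => [[x _ ->]|Iq]; first exact: valP.
by exists (exist _ q Iq).
Qed.

Lemma realizable_rule1 S c k q2 :
  realizable S c k -> rule1 D S q2 -> realizable (q2 |: S) (c + 1) k.+1.
Proof.
case=> V [L [real LS card_V]] [q1 [m [bc S_q1 _]]].
have /imsetP [u _ Lu] : q1 \in [set L v | v : V] by rewrite LS.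
pose L' (x : option V) := if x is Some y then L y else q2.
exists (option V), L'; split.
- apply: (realizes_step (E := fun _ _ => false) (v := None) (m := m)
    (g' := edgeless L') (realizes_clone u real)) => //.
  by split=> [|[y|]] //=; rewrite -Lu.
- by rewrite imset_option -LS.
- by rewrite card_option card_V addn1.
Qed.

Lemma realizable_rule2 S c k q2' :
  realizable S c k -> rule2 D S q2' -> realizable (q2' |: S) (c + 2) k.+1.
Proof.
case=> V [L [real LS card_V]].
case=> q1 [q2 [q1' [m [bc rc S_q1 S_q2 /andP [S_q1' _]]]]].
have /imsetP [a _ La] : q1 \in [set L v | v : V] by rewrite LS.
have /imsetP [b _ Lb] : q1' \in [set L v | v : V] by rewrite LS.
pose E (x y : option (option V)) :=
  (x == Some None) && (y == None) || (x == None) && (y == Some None).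
pose L' (x : option (option V)) :=
  match x with Some (Some y) => L y | Some None => q2 | None => q2' end.
exists (option (option V)), L'; split.
- apply: (realizes_step (E := E) (v := Some None) (m := m) (g' := edgeless L')
    (realizes_clone (Some b) (realizes_clone a real))) => //.
    by split=> [[[x|]|] [[y|]|]|[[x|]|]].
  by split=> [|[[y|]|]] //=; rewrite -?La -?Lb.
- have absorb_q2 : q2 |: S = S by apply/setUidPr; rewrite sub1set.
  by rewrite !imset_option -absorb_q2 -LS.
- by rewrite !card_option card_V addn2.
Qed.

Lemma realizable_sat_iter S c S' c' k :
  sat_iter D S c S' c' -> realizable S c k -> realizable S' c' k.+1.
Proof.
case=> [[q2 [r -> ->]]|[_ [q2' [r -> ->]]]] real.
  exact: realizable_rule1.
exact: realizable_rule2.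
Qed.

End Executions.

Theorem lemma3p3 (Q M : finType) (I : {set Q}) (D : Q -> act M -> Q -> bool)
  (Hcomp : complete_receptions D)
  (m : nat) (S : nat -> {set Q}) (c : nat -> nat)
  (Hrun : sat_run I D m S c) :
  forall i, i <= m ->
    exists (V : finType) (g0 : config V Q) (s : seq (V * M * config V Q)),
      [/\ rexec I D g0 s,
          labels (final_config g0 s) = S i,
          #|V| = c i
        & forall v : V, active_length s v <= i].
Proof.
case: Hrun => S0 c0 iter _.
have real i : i <= m -> realizable I D (S i) (c i) i.
  elim: i => [_|i IH lt_im]; first by rewrite S0 c0; apply: realizable_initial.
  exact: realizable_sat_iter (iter i lt_im) (IH (ltnW lt_im)).
move=> i /real [V [L [[g0 [s [ex fin bound]]] LS card_V]]].
by exists V, g0, s; rewrite /labels fin.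
Qed.
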